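(* Let $\mathcal{M}$ be a test space and let $\mu\in\mathbb{W}$. Then $\|\mu\|_1=\sup\{\mu(a)-\mu(E\setminus a): E\in\mathcal{M},\ a\subseteq E\}$. Hence the norms $\|\cdot\|_{\mathcal{E}}$ and $\|\cdot\|_1$ on $\mathbb{W}$ are equivalent.
   Context: A test space is an irredundant collection $\mathcal{M}$ of nonempty sets (tests) with outcome set $X=\bigcup\mathcal{M}$; an event is a subset of a test. $\mathbb{W}$ is the space of functions $\mu:X\to\mathbb{R}$ such that $\|\mu\|_1:=\sup_{E\in\mathcal{M}}\sum_{x\in E}|\mu(x)|<\infty$ and there is a constant $c$ with $\sum_{x\in E}\mu(x)=c$ for all $E\in\mathcal{M}$. For an event $a$, $\mu(a)=\sum_{x\in a}\mu(x)$, and $\|\mu\|_{\mathcal{E}}=\sup\{|\mu(a)|: a \text{ an event}\}$. *)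

From HB Require Import structures.
From mathcomp Require Import all_boot all_order all_algebra.
From mathcomp Require Import all_classical all_reals.
From mathcomp Require Import ereal esum.
Set Implicit Arguments. Unset Strict Implicit. Unset Printing Implicit Defensive.
Import Order.TTheory GRing.Theory Num.Theory.
Local Open Scope classical_set_scope.
Local Open Scope ring_scope.

Definition test_space (X : Type) (M : set (set X)) : Prop :=
  [/\ (forall E, M E -> E !=set0),
      (forall E F, M E -> M F -> E `<=` F -> E = F) &
      (forall x : X, exists E, M E /\ E x)].

Definition abs_sum (X : choiceType) (R : realType) (A : set X) (mu : X -> R)
  : \bar R := (\esum_(x in A) (`|mu x|)%:E)%E.

(* sum of a real function over a set A, defined via positive and negative parts
   (meaningful when the absolute sum is finite) *)
Definition ssum (X : choiceType) (R : realType) (mu : X -> R) (A : set X) : R :=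
  fine (\esum_(x in A) (Num.max (mu x) 0)%:E)%E
  - fine (\esum_(x in A) (Num.max (- mu x) 0)%:E)%E.

Definition norm1 (X : choiceType) (R : realType) (M : set (set X)) (mu : X -> R)
  : \bar R := ereal_sup [set abs_sum E mu | E in M].

Definition event (X : Type) (M : set (set X)) (a : set X) : Prop :=
  exists2 E, M E & a `<=` E.

Definition normE (X : choiceType) (R : realType) (M : set (set X)) (mu : X -> R)
  : \bar R := ereal_sup [set (`|ssum mu a|)%:E | a in event M].

Definition inW (X : choiceType) (R : realType) (M : set (set X)) (mu : X -> R)
  : Prop :=
  (norm1 M mu < +oo)%E /\ exists c : R, forall E, M E -> ssum mu E = c.

From HB Require Import structures.
From mathcomp Require Import all_boot all_order all_algebra.
From mathcomp Require Import all_classical all_reals.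
From mathcomp Require Import ereal esum.
From mathcomp Require Import lra.
Import Order.TTheory GRing.Theory Num.Theory.
Local Open Scope classical_set_scope.
Local Open Scope ring_scope.

(* For a test E let E+ := nonneg_part mu E be the outcomes of E at which mu is
   nonnegative.  Splitting the positive and negative parts of mu along a and
   E \ a gives mu(a) - mu(E \ a) <= sum_E |mu| and |mu(a)| <= sum_E |mu| for
   every a included in E, with equality in the first at a = E+.  Taking suprema
   over the tests yields the formula for ||mu||_1 and ||mu||_E <= ||mu||_1,
   while sum_E |mu| = mu(E+) - mu(E \ E+) <= 2 ||mu||_E. *)

Lemma esum_subset_setD (R : realType) (T : choiceType) (E a : set T)
    (f : T -> \bar R) : (forall x, E x -> (0 <= f x)%E) -> a `<=` E ->
  \esum_(x in E) f x = (\esum_(x in a) f x + \esum_(x in E `\` a) f x)%E.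
Proof. by move=> f0 aE; rewrite (esumID a) // setIidr // -setDE. Qed.

Section signed_sums.
Context {R : realType} {X : choiceType} (mu : X -> R).

Let pos A := (\esum_(x in A) (Num.max (mu x) 0)%:E)%E.
Let neg A := (\esum_(x in A) (Num.max (- mu x) 0)%:E)%E.

Let ssumE A : ssum mu A = fine (pos A) - fine (neg A). Proof. by []. Qed.

Let max0_ge0 (r : R) : 0 <= Num.max r 0. Proof. by rewrite le_max lexx orbT. Qed.

Let pos_ge0 A : (0 <= pos A)%E.
Proof. by apply: esum_ge0 => x _; rewrite lee_fin max0_ge0. Qed.

Let neg_ge0 A : (0 <= neg A)%E.
Proof. by apply: esum_ge0 => x _; rewrite lee_fin max0_ge0. Qed.

Let abs_sum_pos_neg A : abs_sum A mu = (pos A + neg A)%E.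
Proof.
rewrite /abs_sum -esumD; last 2 first.
- by move=> x _; rewrite lee_fin max0_ge0.
- by move=> x _; rewrite lee_fin max0_ge0.
apply: eq_esum => x _; rewrite -EFinD; congr (_%:E).
have [mu_ge0|mu_lt0] := leP 0 (mu x).
  by rewrite ger0_norm // max_r ?addr0 // oppr_le0.
by rewrite ltr0_norm // max_l ?add0r // oppr_ge0 ltW.
Qed.

Let pos_split {E a : set X} : a `<=` E -> pos E = (pos a + pos (E `\` a))%E.
Proof. by move=> aE; apply: esum_subset_setD => // x _; rewrite lee_fin max0_ge0. Qed.

Let neg_split {E a : set X} : a `<=` E -> neg E = (neg a + neg (E `\` a))%E.
Proof. by move=> aE; apply: esum_subset_setD => // x _; rewrite lee_fin max0_ge0. Qed.

Definition nonneg_part E := E `&` [set x | 0 <= mu x].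

Lemma nonneg_part_sub E : nonneg_part E `<=` E.
Proof. exact: subIsetl. Qed.

Section finite_test.
Variable E : set X.
Hypothesis E_fin : (abs_sum E mu < +oo)%E.

Let abs_sum_split {a : set X} : a `<=` E ->
  fine (abs_sum E mu) =
  fine (pos a) + fine (pos (E `\` a)) + (fine (neg a) + fine (neg (E `\` a))).
Proof.
move=> aE; have : abs_sum E mu \is a fin_num.
  by rewrite ge0_fin_numE // abs_sum_pos_neg adde_ge0.
rewrite abs_sum_pos_neg (pos_split aE) (neg_split aE).
by rewrite !fin_numD => /andP[/andP[? ?] /andP[? ?]]; rewrite !fineD ?fin_numD ?andbT //; apply/andP.
Qed.

Lemma ssum_sub_setD_le a : a `<=` E ->
  ssum mu a - ssum mu (E `\` a) <= fine (abs_sum E mu).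
Proof.
move=> aE; rewrite (abs_sum_split aE) !ssumE.
have := fine_ge0 (neg_ge0 a); have := fine_ge0 (pos_ge0 (E `\` a)); lra.
Qed.

Lemma abs_ssum_le a : a `<=` E -> `|ssum mu a| <= fine (abs_sum E mu).
Proof.
move=> aE; rewrite (abs_sum_split aE) ssumE ler_norml.
have := fine_ge0 (pos_ge0 a); have := fine_ge0 (neg_ge0 a).
have := fine_ge0 (pos_ge0 (E `\` a)); have := fine_ge0 (neg_ge0 (E `\` a)).
move=> *; apply/andP; split; lra.
Qed.

Lemma ssum_sub_setD_nonneg_part :
  ssum mu (nonneg_part E) - ssum mu (E `\` nonneg_part E) = fine (abs_sum E mu).
Proof.
set a := nonneg_part E; have aE : a `<=` E := nonneg_part_sub E.
have neg_a : neg a = 0%E.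
  by apply: esum1 => x [_ /= mu_ge0]; rewrite max_r // oppr_le0.
have pos_Ea : pos (E `\` a) = 0%E.
  apply: esum1 => x [Ex /= a_x]; rewrite max_r // ltW // ltNge.
  by apply/negP => mu_ge0; apply: a_x; split.
by rewrite (abs_sum_split aE) !ssumE neg_a pos_Ea /=; lra.
Qed.

End finite_test.
End signed_sums.

Section norms.
Context {R : realType} {X : choiceType} (M : set (set X)) (mu : X -> R).

Lemma abs_sum_le_norm1 {E : set X} : M E -> (abs_sum E mu <= norm1 M mu)%E.
Proof. by move=> ME; apply: ereal_sup_ubound; exists E. Qed.

Lemma abs_ssum_le_normE {E a : set X} : M E -> a `<=` E ->
  ((`|ssum mu a|)%:E <= normE M mu)%E.
Proof. by move=> ME aE; apply: ereal_sup_ubound; exists a => //; exists E. Qed.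

Hypothesis mu_fin : (norm1 M mu < +oo)%E.

Let abs_sum_fin {E : set X} : M E -> (abs_sum E mu < +oo)%E.
Proof. by move=> ME; apply: le_lt_trans mu_fin; exact: abs_sum_le_norm1. Qed.

Let abs_sum_fineK {E : set X} : M E -> abs_sum E mu = (fine (abs_sum E mu))%:E.
Proof.
move=> ME; rewrite fineK // ge0_fin_numE ?abs_sum_fin //.
by apply: esum_ge0 => x _; rewrite lee_fin.
Qed.

Lemma norm1_signed_sup : norm1 M mu =
  ereal_sup [set r | exists E a, [/\ M E, a `<=` E &
               r = (ssum mu a - ssum mu (E `\` a))%:E]].
Proof.
apply/eqP; rewrite eq_le; apply/andP; split.
  apply: ge_ereal_sup => _ [E ME <-]; apply: ereal_sup_ubound.
  exists E, (nonneg_part mu E); split; [exact: ME | exact: nonneg_part_sub |].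
  by rewrite ssum_sub_setD_nonneg_part ?abs_sum_fin // -abs_sum_fineK.
apply: ge_ereal_sup => _ [E [a [ME aE ->]]].
apply: (le_trans _ (abs_sum_le_norm1 ME)).
by rewrite (abs_sum_fineK ME) lee_fin ssum_sub_setD_le ?abs_sum_fin.
Qed.

Lemma normE_le_norm1 : (normE M mu <= norm1 M mu)%E.
Proof.
apply: ge_ereal_sup => _ [a [E ME aE] <-].
apply: (le_trans _ (abs_sum_le_norm1 ME)).
by rewrite (abs_sum_fineK ME) lee_fin abs_ssum_le ?abs_sum_fin.
Qed.

Lemma norm1_le_twice_normE : (norm1 M mu <= 2%:E * normE M mu)%E.
Proof.
apply: ge_ereal_sup => _ [E ME <-].
rewrite (abs_sum_fineK ME) -ssum_sub_setD_nonneg_part ?abs_sum_fin //.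
set a := nonneg_part mu E; have aE : a `<=` E := nonneg_part_sub mu E.
have EaE : E `\` a `<=` E by apply: subDsetl.
apply: (@le_trans _ _ ((`|ssum mu a|)%:E + (`|ssum mu (E `\` a)|)%:E)%E).
  by rewrite -EFinD lee_fin (le_trans (ler_norm _)) ?ler_normB.
by rewrite (mule_natl (normE M mu) 2) mule2n leeD ?(abs_ssum_le_normE ME).
Qed.

End norms.

Theorem lemmaC4 (R : realType) (X : choiceType) (M : set (set X)) :
  test_space M ->
  (forall mu : X -> R, inW M mu ->
     norm1 M mu =
     ereal_sup [set r | exists E a, [/\ M E, a `<=` E &
                  r = (ssum mu a - ssum mu (E `\` a))%:E]]) /\
  (exists k1 k2 : R, 0 < k1 /\ 0 < k2 /\
     forall mu : X -> R, inW M mu ->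
       (normE M mu <= k1%:E * norm1 M mu)%E /\
       (norm1 M mu <= k2%:E * normE M mu)%E).
Proof.
move=> _; split=> [mu [mu_fin _]|]; first exact: norm1_signed_sup.
exists 1, 2; do 2!split=> //; move=> mu [mu_fin _]; rewrite mul1e.
by split; [apply: normE_le_norm1 | apply: norm1_le_twice_normE].
Qed.
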